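(* There is an absolute constant $C>0$ such that for every positive integer $n$ the following holds. Suppose that $\mathcal{A}\subset\mathcal{P}[n]$ does not contain two distinct sets $A$ and $B$ with $|B\setminus A|=2|A\setminus B|$ in which $a<b$ for every $a\in A\setminus B$ and every $b\in B\setminus A$. Then \[ |\mathcal{A}|\le C\,e^{120(\log n)^{1/2}}\frac{2^n}{n^{1/2}}. \]
   Context: $[n]=\{1,\ldots,n\}$ and $\mathcal{P}[n]$ is its power set; $\log$ is the natural logarithm. *)

From mathcomp Require Import all_boot.
From Stdlib Require Import Reals.
Set Implicit Arguments. Unset Strict Implicit. Unset Printing Implicit Defensive.

(* Ground set [n] = {1..n} is modelled by 'I_n = {0..n-1}, order-preserving. *)

Definition forbidden_pair (n : nat) (A B : {set 'I_n}) : Prop :=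
  A != B /\
  #|B :\: A| = (2 * #|A :\: B|)%N /\
  (forall a b : 'I_n, a \in A :\: B -> b \in B :\: A -> (a < b)%N).

Definition free_family (n : nat) (F : {set {set 'I_n}}) : Prop :=
  forall A B, A \in F -> B \in F -> ~ forbidden_pair A B.

From Stdlib Require Import Reals Lra Psatz.
From mathcomp Require Import all_boot zify_ssreflect.
Set Implicit Arguments. Unset Strict Implicit. Unset Printing Implicit Defensive.

(* Let m = n / 3 and group 3m points of [n] into the triples (i, m + 2i, m + 2i + 1), i < m.
   If a set has the pattern (1,0,0) on triple i, switching it to (0,1,1) removes the point
   i < m and adds the two points m + 2i, m + 2i + 1 >= m; a chain of such switches turns A into a
   set B such that A, B form a forbidden pair.  Sorting sets by the number M of triples carrying
   one of these two patterns, each class is a disjoint union of M-dimensional Boolean cubes whose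
   cover relation is a switch, so a free family contains at most a C(M, M/2) / 2^M fraction of the
   class (LYM), which is about sqrt (2 / (pi M)).  Since M is binomial with mean about n / 12,
   averaging over the classes gives |F| <= 5 2^n / sqrt n, stronger than the stated bound. *)

Lemma leq_bin_addr M k d : k + d <= M./2 -> 'C(M, k) <= 'C(M, k + d).
Proof.
elim: d => [|d IH] kdM; first by rewrite addn0.
apply: leq_trans (IH _) _; first lia.
rewrite addnS -(@leq_pmul2l (k + d).+1) // mul_bin_left leq_mul2r.
by apply/orP; right; lia.
Qed.

Lemma leq_bin_half M k : 'C(M, k) <= 'C(M, M./2).
Proof.
have [kM|] := leqP k M; last by move/bin_small->.
have [kh|hk] := leqP k M./2.
  by have := @leq_bin_addr M k (M./2 - k); rewrite subnKC //; apply.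
rewrite -bin_sub //.
by have := @leq_bin_addr M (M - k) (M./2 - (M - k)); rewrite subnKC; [apply|]; lia.
Qed.

Lemma sum_bin M : \sum_(k < M.+1) 'C(M, k) = 2 ^ M.
Proof.
rewrite -[2]/(1 + 1) expnDn.
by apply: eq_bigr => k _; rewrite !exp1n !muln1.
Qed.

Lemma mul_bin_half_double k :
  k.+1 * 'C(k.*2.+2, k.+1) = 2 * k.*2.+1 * 'C(k.*2, k).
Proof.
have e1 := mul_bin_diag k.*2.+2 k.
have e2 := mul_bin_down k.*2.+1 k.
rewrite /= (_ : k.*2.+1 - k = k.+1) in e1 e2; last lia.
apply/eqP; rewrite -(@eqn_pmul2l k.+1) // -e1 mulnCA -e2; apply/eqP; lia.
Qed.

Lemma bin_half_double_sq k : 'C(k.*2, k) ^ 2 * (3 * k + 1) <= 16 ^ k.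
Proof.
elim: k => [|k IH] //.
have h : (2 * k.*2.+1) ^ 2 * (3 * k + 4) <= 16 * k.+1 ^ 2 * (3 * k + 1).
  by rewrite -!mul2n; nia.
rewrite doubleS -(@leq_pmul2l (k.+1 ^ 2)) ?expn_gt0 //.
have -> : k.+1 ^ 2 * ('C(k.*2.+2, k.+1) ^ 2 * (3 * k.+1 + 1)) =
          (k.+1 * 'C(k.*2.+2, k.+1)) ^ 2 * (3 * k + 4).
  by rewrite expnMn -mulnA; congr (_ * (_ * _)); lia.
rewrite mul_bin_half_double [16 ^ _]expnS [(_ * _) ^ 2]expnMn.
move: ('C(k.*2, k)) (16 ^ k) IH => b Y IH.
have := leq_mul h (leqnn (b ^ 2)); have := leq_mul (leqnn (16 * k.+1 ^ 2)) IH.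
lia.
Qed.

Lemma bin_half_sq M : 'C(M, M./2) ^ 2 * M.+1 <= 2 * 4 ^ M.
Proof.
have e16 k : 4 ^ k.*2 = 16 ^ k by rewrite -mul2n expnM.
have [[k ->]|[k ->]] : (exists k, M = k.*2.+1) \/ (exists k, M = k.*2).
  by rewrite -[M]odd_double_half; case: (odd M); [left|right]; exists M./2.
- have e := mul_bin_diag k.*2.+2 k; rewrite /= in e.
  have bin_odd : 'C(k.*2.+2, k.+1) = 2 * 'C(k.*2.+1, k).
    by apply/eqP; rewrite -(@eqn_pmul2l k.+1) // -e; apply/eqP; lia.
  have := bin_half_double_sq k.+1; rewrite doubleS bin_odd -[k.*2.+1]add1n.
  have -> : (k.*2.+1)./2 = k by rewrite /= uphalf_double.
  rewrite [4 ^ _]expnS e16 [16 ^ _]expnS expnMn.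
  move: ('C(k.*2.+1, k)) (16 ^ k) => s Y; nia.
- rewrite doubleK e16; have := bin_half_double_sq k.
  move: ('C(k.*2, k)) (16 ^ k) => s Y; nia.
Qed.

Lemma card_by_level (T : finType) (H : {set T}) (f : T -> nat) K :
  (forall A, A \in H -> f A <= K) ->
  #|H| = \sum_(k < K.+1) #|[set A in H | f A == k]|.
Proof.
move=> fK; rewrite -sum1_card (partition_big (fun A => inord (f A) : 'I_K.+1) xpredT) //=.
apply: eq_bigr => k _; rewrite -sum1_card; apply: eq_bigl => A; rewrite inE.
case AH: (A \in H) => //=; rewrite -(inj_eq val_inj) /= inordK //; exact: fK.
Qed.

Section DoubleCounting.
Variables (T : finType) (up : T -> {set T}) (S S' : {set T}) (p : nat).
Hypothesis up_sub : forall A, A \in S -> up A \subset S'.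
Hypothesis card_up : forall A, A \in S -> #|up A| = p.

Lemma double_count :
  #|S| * p = \sum_(B in S') #|[set A in S | B \in up A]|.
Proof.
rewrite -sum_nat_const.
transitivity (\sum_(A in S) \sum_(B in S') (B \in up A)).
  apply: eq_bigr => A AS; rewrite -(card_up AS) -{1}(setIidPl (up_sub AS)).
  rewrite -sum1_card big_mkcond [RHS]big_mkcond; apply: eq_bigr => B _.
  by rewrite inE; case: (B \in up A); case: (B \in S').
rewrite exchange_big; apply: eq_bigr => B _.
rewrite -sum1_card big_mkcond [RHS]big_mkcond; apply: eq_bigr => A _.
by rewrite inE; case: (A \in S); case: (B \in up A).
Qed.

Lemma double_count_le q :
  (forall B, B \in S' -> #|[set A in S | B \in up A]| <= q) -> #|S| * p <= #|S'| * q.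
Proof. by move=> down_le; rewrite double_count -sum_nat_const; apply: leq_sum. Qed.

Lemma double_count_eq q :
  (forall B, B \in S' -> #|[set A in S | B \in up A]| = q) -> #|S| * p = #|S'| * q.
Proof. by move=> down_eq; rewrite double_count -sum_nat_const; apply: eq_bigr. Qed.

End DoubleCounting.

Section RegularGradedLYM.
Variables (T : finType) (W : {set T}) (rank : T -> nat) (M : nat).
Variables (up : T -> {set T}) (R : rel T) (G : {set T}).
Hypothesis rank_le : forall A, A \in W -> rank A <= M.
Hypothesis up_rank : forall A B, A \in W -> B \in up A -> B \in W /\ rank B = (rank A).+1.
Hypothesis card_up : forall A, A \in W -> #|up A| = M - rank A.
Hypothesis card_down : forall B, B \in W -> #|[set A in W | B \in up A]| = rank B.
Hypothesis R_refl : forall A, R A A.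
Hypothesis R_up : forall A B B', R A B -> B' \in up B -> R A B' /\ A != B'.
Hypothesis sub_GW : G \subset W.
Hypothesis G_antichain : forall A B, A \in G -> B \in G -> R A B -> A = B.

Let level k := [set A in W | rank A == k].
Let shadow (S : {set T}) := \bigcup_(A in S) up A.
(* [weight k = M! / 'C(M, k)], the LYM weight of rank k. *)
Let weight k := k`! * (M - k)`!.

Lemma card_level_rec k : k < M -> #|level k| * (M - k) = #|level k.+1| * k.+1.
Proof.
move=> kM; apply: (double_count_eq (up := up)).
- move=> A; rewrite inE => /andP [AW /eqP Ak]; apply/subsetP => B BA.
  by have [BW e] := up_rank AW BA; rewrite inE BW e Ak eqxx.
- by move=> A; rewrite inE => /andP [AW /eqP <-]; apply: card_up.
move=> B; rewrite inE => /andP [BW /eqP Bk]; rewrite -Bk -card_down //.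
apply: eq_card => A; rewrite !inE; apply/andP/andP => [[/andP [] //]|[AW BA]].
by have [_ e] := up_rank AW BA; rewrite AW BA; split => //; apply/eqP; lia.
Qed.

Lemma card_level k : k <= M -> #|level k| = #|level M| * 'C(M, k).
Proof.
move=> kM; rewrite -(subKn kM) bin_sub ?leq_subr //; move: (M - k) (leq_subr k M) => d.
elim: d => [|d IH] dM; first by rewrite subn0 bin0 muln1.
have := @card_level_rec (M - d.+1); rewrite (_ : M - (M - d.+1) = d.+1); last lia.
rewrite (_ : (M - d.+1).+1 = M - d) ?IH; [|lia..] => rec.
apply/eqP; rewrite -(@eqn_pmul2r d.+1) // {}rec; last lia.
by rewrite -!mulnA [_ * d.+1]mulnC mul_bin_left [_ * (M - d)]mulnC.
Qed.

Lemma weighted_shadow k (S : {set T}) : k < M -> S \subset level k ->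
  #|S| * weight k <= #|shadow S| * weight k.+1.
Proof.
move=> kM sub_S.
have Sk A : A \in S -> A \in W /\ rank A = k.
  by move/(subsetP sub_S); rewrite inE => /andP [-> /eqP].
have : #|S| * (M - k) <= #|shadow S| * k.+1.
  apply: (double_count_le (up := up)).
  - by move=> A AS; apply/subsetP => B BA; apply/bigcupP; exists A.
  - by move=> A /Sk [AW <-]; apply: card_up.
  move=> B /bigcupP [A /Sk [AW Ak] BA]; have [BW rankB] := up_rank AW BA.
  rewrite -Ak -rankB -card_down //; apply: subset_leq_card; apply/subsetP => A'.
  by rewrite !inE => /andP [/Sk [-> _] ->].
rewrite /weight factS (_ : M - k = (M - k.+1).+1); last lia.
rewrite factS; move: (M - k.+1) => r h.
have := leq_mul h (leqnn (k`! * r`!)); move: (k`!) (r`!) => a b; lia.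
Qed.

Lemma weight_gt0 k : 0 < weight k.
Proof. by rewrite muln_gt0 !fact_gt0. Qed.

Let above j := [set B in level j | [exists A in G, R A B]].
Let G_level k := [set A in G | rank A == k].

Lemma G_level_sub_above k : G_level k \subset above k.
Proof.
apply/subsetP => A; rewrite !inE => /andP [AG ->].
by rewrite (subsetP sub_GW) //=; apply/existsP; exists A; rewrite AG R_refl.
Qed.

Lemma shadow_above j : shadow (above j) \subset above j.+1.
Proof.
apply/subsetP => B /bigcupP [A]; rewrite !inE => /andP [/andP [AW /eqP Aj]].
case/existsP => A0 /andP [A0G RA] BA; have [BW ->] := up_rank AW BA.
by rewrite BW Aj eqxx; apply/existsP; exists A0; rewrite A0G (R_up RA BA).1.
Qed.

Lemma disjoint_G_level_shadow j : [disjoint G_level j.+1 & shadow (above j)].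
Proof.
apply/pred0P => B /=; apply/negP => /andP [].
rewrite inE => /andP [BG _] /bigcupP [A]; rewrite inE => /andP [_].
case/existsP => A0 /andP [A0G RA] BA; have [RB neq] := R_up RA BA.
by rewrite (G_antichain A0G BG RB) eqxx in neq.
Qed.

Lemma sum_weighted_G_level j : j <= M ->
  \sum_(k < j.+1) #|G_level k| * weight k <= #|above j| * weight j.
Proof.
elim: j => [|j IH] jM.
  by rewrite big_ord_recl big_ord0 addn0 leq_mul2r subset_leq_card ?G_level_sub_above ?orbT.
rewrite big_ord_recr /=.
have card_above : #|G_level j.+1| + #|shadow (above j)| <= #|above j.+1|.
  have /eqP := cardsU (G_level j.+1) (shadow (above j)).
  rewrite (disjoint_setI0 (disjoint_G_level_shadow j)) cards0 subn0 => /eqP <-.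
  by apply: subset_leq_card; rewrite subUset G_level_sub_above shadow_above.
have above_j : above j \subset level j by apply/subsetP => A; rewrite inE => /andP [].
have := leq_trans (IH (ltnW jM)) (weighted_shadow jM above_j).
move: card_above; rewrite -(leq_pmul2r (weight_gt0 j.+1)).
rewrite mulnDl => h1 h2; apply: leq_trans h1; by rewrite addnC leq_add2l.
Qed.

Lemma weight_half_le k : k <= M -> weight M./2 <= weight k.
Proof.
move=> kM; rewrite -(@leq_pmul2l 'C(M, k)) ?bin_gt0 //.
apply: leq_trans (leq_mul (leq_bin_half M k) (leqnn _)) _.
by rewrite /weight !bin_fact //; lia.
Qed.

Theorem lym_regular : #|G| * 2 ^ M <= 'C(M, M./2) * #|W|.
Proof.
have card_W : #|W| = #|level M| * 2 ^ M.
  rewrite (card_by_level rank_le) -sum_bin big_distrr /=.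
  by apply: eq_bigr => k _; apply: card_level; rewrite -ltnS.
have card_G : #|G| = \sum_(k < M.+1) #|G_level k|.
  by rewrite (@card_by_level _ G rank M) // => A /(subsetP sub_GW); apply: rank_le.
have : #|G| * weight M./2 <= #|level M| * M`!.
  have above_M : #|above M| <= #|level M|.
    by apply/subset_leq_card/subsetP => A; rewrite inE => /andP [].
  have weight_M : weight M = M`! by rewrite /weight subnn fact0 muln1.
  rewrite card_G big_distrl /=.
  apply: leq_trans (leq_trans (sum_weighted_G_level (leqnn M)) _).
    by apply: leq_sum => k _; rewrite leq_mul2l weight_half_le ?orbT // -ltnS.
  by rewrite weight_M leq_mul2r above_M orbT.
have half_le : M./2 <= M by lia.
rewrite -(bin_fact half_le) -/(weight M./2) => key.
rewrite card_W -(leq_pmul2r (weight_gt0 M./2)).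
have := leq_mul key (leqnn (2 ^ M)).
move: (weight M./2) (2 ^ M) #|G| #|level M| 'C(M, M./2) => w p g l c; nia.
Qed.

End RegularGradedLYM.

Section Triples.
Variable n : nat.
Local Notation m := (n %/ 3).

Lemma low_lt (i : 'I_m) : i < n. Proof. by have := ltn_ord i; lia. Qed.
Lemma high1_lt (i : 'I_m) : m + 2 * i < n. Proof. by have := ltn_ord i; lia. Qed.
Lemma high2_lt (i : 'I_m) : (m + 2 * i).+1 < n. Proof. by have := ltn_ord i; lia. Qed.

Definition low i : 'I_n := Ordinal (low_lt i).
Definition high1 i : 'I_n := Ordinal (high1_lt i).
Definition high2 i : 'I_n := Ordinal (high2_lt i).

Lemma low_neq_high1 i j : low i != high1 j.
Proof. by apply/eqP => /(congr1 val) /=; have := ltn_ord i; lia. Qed.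
Lemma low_neq_high2 i j : low i != high2 j.
Proof. by apply/eqP => /(congr1 val) /=; have := ltn_ord i; lia. Qed.
Lemma high1_neq_high2 i j : high1 i != high2 j.
Proof. by apply/eqP => /(congr1 val) /=; lia. Qed.

Lemma eq_low i j : (low i == low j) = (i == j).
Proof. by apply/eqP/eqP => [/(congr1 val) /= /val_inj|->]. Qed.
Lemma eq_high1 i j : (high1 i == high1 j) = (i == j).
Proof. by apply/eqP/eqP => [/(congr1 val) /= ij|->] //; apply: val_inj => /=; lia. Qed.
Lemma eq_high2 i j : (high2 i == high2 j) = (i == j).
Proof. by apply/eqP/eqP => [/(congr1 val) /= ij|->] //; apply: val_inj => /=; lia. Qed.

Definition pattern (A : {set 'I_n}) (i : 'I_m) : bool * bool * bool :=
  (low i \in A, high1 i \in A, high2 i \in A).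

Definition repattern (A : {set 'I_n}) i (p : bool * bool * bool) : {set 'I_n} :=
  [set j | if j == low i then p.1.1 else if j == high1 i then p.1.2
           else if j == high2 i then p.2 else j \in A].

Lemma pattern_repattern A i p : pattern (repattern A i p) i = p.
Proof.
case: p => [[a b] c]; rewrite /pattern /repattern !inE eqxx /=.
by rewrite eq_sym (negbTE (low_neq_high1 _ _)) eqxx eq_sym (negbTE (low_neq_high2 _ _))
  eq_sym (negbTE (high1_neq_high2 _ _)) eqxx.
Qed.

Lemma pattern_repattern_neq A i j p : i != j -> pattern (repattern A i p) j = pattern A j.
Proof.
move=> /negbTE ij; rewrite /pattern /repattern !inE eq_low eq_high1 eq_high2 eq_sym ij.
rewrite (negbTE (low_neq_high1 _ _)) (negbTE (low_neq_high2 _ _)).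
rewrite eq_sym (negbTE (low_neq_high1 _ _)) (negbTE (high1_neq_high2 _ _)).
by rewrite eq_sym (negbTE (low_neq_high2 _ _)) eq_sym (negbTE (high1_neq_high2 _ _)).
Qed.

Lemma repattern_id A i : repattern A i (pattern A i) = A.
Proof.
apply/setP => j; rewrite /repattern /pattern !inE /=.
by case: eqVneq => [->|_] //; case: eqVneq => [->|_] //; case: eqVneq => [->|_].
Qed.

Lemma repattern_repattern A i p q : repattern (repattern A i p) i q = repattern A i q.
Proof.
apply/setP => j; rewrite /repattern !inE /=.
by case: (j == low i); case: (j == high1 i); case: (j == high2 i).
Qed.

Lemma repattern_inj A i j p q :
  repattern A i p = repattern A j q -> p != pattern A i -> i = j /\ p = q.
Proof.
move=> E pA; have [ij|ij] := eqVneq i j.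
  by subst j; split=> //; rewrite -(pattern_repattern A i p) E pattern_repattern.
have := pattern_repattern A i p; rewrite E pattern_repattern_neq 1?eq_sym // => e.
by rewrite e eqxx in pA.
Qed.

Lemma pattern_set_repattern (P : pred (bool * bool * bool)) A i p :
  [set j | P (pattern (repattern A i p) j)] =
  if P p then i |: [set j | P (pattern A j)] else [set j | P (pattern A j)] :\ i.
Proof.
apply/setP => j; have [->|ji] := eqVneq j i.
  by rewrite inE pattern_repattern; case: (P p); rewrite !inE eqxx.
by rewrite inE pattern_repattern_neq 1?eq_sym //; case: (P p); rewrite !inE (negbTE ji).
Qed.

Definition lo_pat := (true, false, false).
Definition hi_pat := (false, true, true).
Definition switchable (p : bool * bool * bool) := (p == lo_pat) || (p == hi_pat).

Definition switch_idx A := [set i | switchable (pattern A i)].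
Definition lo_idx A := [set i | pattern A i == lo_pat].
Definition hi_idx A := [set i | pattern A i == hi_pat].

Definition switch_class M := [set A : {set 'I_n} | #|switch_idx A| == M].
Definition raise A := [set repattern A i hi_pat | i in lo_idx A].

Definition lifts (A B : {set 'I_n}) : bool :=
  [&& A :\: B \subset [set j : 'I_n | j < m], B :\: A \subset [set j : 'I_n | m <= j]
    & #|B :\: A| == 2 * #|A :\: B|].

Lemma switch_idx_repattern A i p :
  switchable (pattern A i) -> switchable p -> switch_idx (repattern A i p) = switch_idx A.
Proof.
by move=> Ai sp; rewrite /switch_idx pattern_set_repattern sp; apply/setUidPr; rewrite sub1set inE.
Qed.

Lemma card_switch_idx A : #|switch_idx A| = #|lo_idx A| + #|hi_idx A|.
Proof.
rewrite -cardsUI (_ : lo_idx A :&: hi_idx A = set0) ?cards0 ?addn0.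
  by apply: eq_card => i; rewrite !inE.
by apply/setP => i; rewrite !inE; case: eqP => // ->.
Qed.

Lemma raiseP A B :
  reflect (exists2 i, pattern A i = lo_pat & B = repattern A i hi_pat) (B \in raise A).
Proof.
apply: (iffP imsetP) => [[i]|[i Ai ->]]; last by exists i; rewrite // inE Ai.
by rewrite inE => /eqP Ai ->; exists i.
Qed.

Lemma raise_switch_class M A B : A \in switch_class M -> B \in raise A ->
  B \in switch_class M /\ #|hi_idx B| = (#|hi_idx A|).+1.
Proof.
rewrite !inE => AM /raiseP [i Ai ->]; rewrite switch_idx_repattern ?Ai //; split=> //.
by rewrite /hi_idx (pattern_set_repattern (eq_op^~ hi_pat)) eqxx cardsU1 inE Ai.
Qed.

Lemma card_raise M A : A \in switch_class M -> #|raise A| = M - #|hi_idx A|.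
Proof.
rewrite inE => /eqP <-; rewrite card_switch_idx addnK card_in_imset //.
by move=> i j; rewrite !inE => /eqP Ai _ /repattern_inj[]; rewrite ?Ai.
Qed.

Lemma card_lower M B : B \in switch_class M ->
  #|[set A in switch_class M | B \in raise A]| = #|hi_idx B|.
Proof.
move=> BM.
have -> : [set A in switch_class M | B \in raise A] = [set repattern B i lo_pat | i in hi_idx B].
  apply/setP => A; rewrite inE; apply/andP/imsetP => [[AM /raiseP [i Ai ->]]|[i]].
    by exists i; rewrite ?inE ?pattern_repattern // repattern_repattern -Ai repattern_id.
  rewrite inE => /eqP Bi ->; split.
    by move: BM; rewrite !inE switch_idx_repattern ?Bi.
  by apply/raiseP; exists i; rewrite ?pattern_repattern // repattern_repattern -Bi repattern_id.
rewrite card_in_imset //.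
by move=> i j; rewrite !inE => /eqP Bi _ /repattern_inj[]; rewrite ?Bi.
Qed.

Lemma lifts_refl A : lifts A A.
Proof. by rewrite /lifts setDv !sub0set cards0. Qed.

Lemma lifts_lo_pat A B i : lifts A B -> pattern B i = lo_pat -> pattern A i = lo_pat.
Proof.
case/and3P => /subsetP AB_low /subsetP BA_high _; rewrite /pattern => -[lB h1B h2B].
have notin_AB j : j \in A -> j \notin B -> j < m.
  by move=> jA jB; have := AB_low j; rewrite !inE jA jB; apply.
have in_A : low i \in A.
  apply/idPn => lA; have := BA_high (low i); rewrite !inE lA lB => /(_ isT).
  by rewrite /=; have := ltn_ord i; lia.
rewrite in_A.
case hA1 : (high1 i \in A); first by have := notin_AB _ hA1; rewrite h1B /=; lia.
case hA2 : (high2 i \in A); first by have := notin_AB _ hA2; rewrite h2B /=; lia.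
by [].
Qed.

Lemma setD_raise A B i : pattern A i = lo_pat -> pattern B i = lo_pat ->
  A :\: repattern B i hi_pat = low i |: (A :\: B) /\
  repattern B i hi_pat :\: A = high1 i |: (high2 i |: (B :\: A)).
Proof.
rewrite /pattern => -[lA h1A h2A] [lB h1B h2B].
split; apply/setP => j; rewrite !inE /=; do 3?[case: eqVneq => [->|_] /=;
  rewrite ?lA ?h1A ?h2A ?andbF ?(negbTE (low_neq_high1 _ _)) ?(negbTE (low_neq_high2 _ _)) //].
Qed.

Lemma lifts_raise A B B' : lifts A B -> B' \in raise B -> lifts A B' /\ A != B'.
Proof.
move=> AB /raiseP [i Bi ->]; have Ai := lifts_lo_pat AB Bi.
have [eA eB] := setD_raise Ai Bi; move: AB Ai Bi.
rewrite /lifts eA eB /pattern => /and3P [AB_low BA_high /eqP card_BA] [lA h1A h2A] [lB h1B h2B].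
split; last by apply/eqP => /setP /(_ (low i)); rewrite lA inE eqxx.
have i_lt := ltn_ord i.
rewrite !subUset !sub1set AB_low BA_high !inE /= !cardsU1 !inE card_BA.
rewrite (negbTE (high1_neq_high2 _ _)) h1A h2A h1B h2B lA lB i_lt /=.
by rewrite leq_addr leqW ?leq_addr //=; apply/eqP; lia.
Qed.

Lemma card_switchable : #|[set p | switchable p]| = 2.
Proof.
rewrite (_ : [set p | switchable p] = [set lo_pat; hi_pat]) ?cards2 //.
by apply/setP => -[[a b] c]; rewrite !inE.
Qed.

Lemma card_unswitchable : #|[set p | ~~ switchable p]| = 6.
Proof.
have e : ~: [set p | switchable p] = [set p | ~~ switchable p] by apply/setP => p; rewrite !inE.
by have := cardsC [set p | switchable p]; rewrite e card_switchable !card_prod !card_bool; lia.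
Qed.

Lemma card_unswitchable_idx A : #|[set i | ~~ switchable (pattern A i)]| = m - #|switch_idx A|.
Proof.
have e : ~: switch_idx A = [set i | ~~ switchable (pattern A i)] by apply/setP => i; rewrite !inE.
by have := cardsC (switch_idx A); rewrite e card_ord; lia.
Qed.

Definition moves A (P Q : pred (bool * bool * bool)) :=
  [set x : 'I_m * (bool * bool * bool) | P (pattern A x.1) && Q x.2].

Lemma card_moves A P Q : #|moves A P Q| = #|[set i | P (pattern A i)]| * #|[set p | Q p]|.
Proof. by rewrite -cardsX; apply: eq_card => -[i p]; rewrite !inE. Qed.

Lemma card_repattern_moves A (P Q : pred (bool * bool * bool)) :
  (forall p, P p -> ~~ Q p) ->
  #|[set repattern A x.1 x.2 | x in moves A P Q]| = #|moves A P Q|.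
Proof.
move=> PQ; apply: card_in_imset => -[i p] [j q]; rewrite !inE /= => /andP [Pi Qp] _ E.
have pA : p != pattern A i by apply: contraTneq Qp => ->; exact: PQ.
by have [-> ->] := repattern_inj E pA.
Qed.

Definition grow A := [set repattern A x.1 x.2 | x in moves A [pred p | ~~ switchable p] switchable].

Lemma grow_switch_class M A B : A \in switch_class M -> B \in grow A -> B \in switch_class M.+1.
Proof.
rewrite !inE => /eqP <- /imsetP [[i p]]; rewrite inE /= => /andP [Ai sp] ->.
by rewrite /switch_idx pattern_set_repattern sp cardsU1 inE Ai.
Qed.

Lemma card_grow A : #|grow A| = (m - #|switch_idx A|) * 2.
Proof.
by rewrite card_repattern_moves ?card_moves ?card_unswitchable_idx ?card_switchable.
Qed.

Lemma card_shrink M B : B \in switch_class M.+1 ->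
  #|[set A in switch_class M | B \in grow A]| = M.+1 * 6.
Proof.
rewrite inE => /eqP BM.
have -> : [set A in switch_class M | B \in grow A] =
    [set repattern B x.1 x.2 | x in moves B switchable [pred p | ~~ switchable p]].
  apply/setP => A; rewrite inE; apply/andP/imsetP => [[_ /imsetP [[i p]]]|[[i q]]].
    rewrite inE /= => /andP [Ai sp] ->.
    exists (i, pattern A i); last by rewrite /= repattern_repattern repattern_id.
    by rewrite inE /= pattern_repattern sp.
  rewrite inE /= => /andP [Bi nq] ->; split.
    rewrite inE /switch_idx pattern_set_repattern (negbTE nq) (cardsD1 i) inE Bi in BM *.
    by apply/eqP; move: BM; rewrite add1n => -[].
  apply/imsetP; exists (i, pattern B i); last by rewrite /= repattern_repattern repattern_id.
  by rewrite inE /= pattern_repattern nq.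
by rewrite card_repattern_moves ?card_moves ?card_unswitchable -?BM // => p /= ->.
Qed.

Lemma card_switch_idx_le A : #|switch_idx A| <= m.
Proof. by have := max_card (switch_idx A); rewrite card_ord. Qed.

(* A triple is switchable in 2 of its 8 patterns: class sizes are binomial with parameter 1/4. *)
Lemma card_switch_class_rec M :
  #|switch_class M| * (m - M) = #|switch_class M.+1| * (3 * M.+1).
Proof.
have : #|switch_class M| * ((m - M) * 2) = #|switch_class M.+1| * (M.+1 * 6).
  apply: double_count_eq => [A AM|A|B]; last exact: card_shrink.
  - by apply/subsetP => B; apply: grow_switch_class.
  - by rewrite inE => /eqP <-; apply: card_grow.
by move: (m - M) #|switch_class M| #|switch_class M.+1| => d a b; lia.
Qed.

Lemma sum_card_switch_class : \sum_(M < m.+1) #|switch_class M| = 2 ^ n.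
Proof.
rewrite -[n in 2 ^ n]card_ord -cardsT -card_powerset powersetT.
rewrite (@card_by_level _ _ (fun A => #|switch_idx A|) m) => [|A _].
  by apply: eq_bigr => M _; apply: eq_card => A; rewrite !inE.
exact: card_switch_idx_le.
Qed.

Lemma card_split_switch_class (F : {set {set 'I_n}}) :
  #|F| = \sum_(M < m.+1) #|F :&: switch_class M|.
Proof.
rewrite (@card_by_level _ F (fun A => #|switch_idx A|) m) => [|A _].
  by apply: eq_bigr => M _; apply: eq_card => A; rewrite !inE.
exact: card_switch_idx_le.
Qed.

Lemma switch_class_overflow : switch_class m.+1 = set0.
Proof.
by apply/setP => A; rewrite !inE; apply/negbTE; rewrite neq_ltn ltnS card_switch_idx_le.
Qed.

Lemma card_free_switch_class (F : {set {set 'I_n}}) M : free_family F ->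
  #|F :&: switch_class M| * 2 ^ M <= 'C(M, M./2) * #|switch_class M|.
Proof.
move=> F_free; apply: (@lym_regular _ _ (fun A => #|hi_idx A|) M raise lifts).
- by move=> A; rewrite inE => /eqP <-; rewrite card_switch_idx leq_addl.
- exact: raise_switch_class.
- exact: card_raise.
- exact: card_lower.
- exact: lifts_refl.
- exact: lifts_raise.
- exact: subsetIr.
move=> A B; rewrite !inE => /andP [AF _] /andP [BF _] /and3P [AB_low BA_high /eqP card_BA].
apply/eqP/negPn/negP => AB; apply: (F_free A B AF BF); split=> //; split=> // a b aA bB.
by have := subsetP AB_low a aA; have := subsetP BA_high b bB; rewrite !inE; lia.
Qed.

End Triples.

Section RealBounds.
Local Open Scope R_scope.

Lemma amgm_le (a t x : R) : 0 < t -> 0 <= a -> 0 <= x ->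
  a ^ 2 * (x + 1) <= 2 -> a <= t / (x + 1) + / (2 * t).
Proof.
move=> t_gt0 a_ge0 x_ge0 a_sq.
set u := t / (x + 1); set v := / (2 * t).
have u_gt0 : 0 < u by apply: Rdiv_lt_0_compat; lra.
have v_gt0 : 0 < v by apply: Rinv_0_lt_compat; lra.
have uv : 4 * (u * v) * (x + 1) = 2 by rewrite /u /v; field; lra.
have sq : a ^ 2 <= (u + v) ^ 2.
  apply: (Rmult_le_reg_r (x + 1)); first lra.
  apply: Rle_trans a_sq _.
  have : 0 <= (u - v) ^ 2 * (x + 1) by apply: Rmult_le_pos; [apply: pow2_ge_0 | lra].
  nra.
nra.
Qed.

(* By the recurrence, (m + 1) w_M / (M + 1) = w_M + 3 w_(M+1), which telescopes. *)
Lemma sum_div_succ_le (m : nat) (w : nat -> R) (total : R) :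
  (forall M, 0 <= w M) ->
  (forall M, (M <= m)%N -> w M * (INR m - INR M) = 3 * (INR M + 1) * w (S M)) ->
  sum_f_R0 w m = total -> sum_f_R0 w (S m) = total ->
  (INR m + 1) * sum_f_R0 (fun M => w M / (INR M + 1)) m <= 4 * total.
Proof.
move=> w_ge0 w_rec sum_m sum_Sm.
have -> : (INR m + 1) * sum_f_R0 (fun M => w M / (INR M + 1)) m =
          sum_f_R0 w m + 3 * sum_f_R0 (fun M => w (S M)) m.
  rewrite scal_sum [3 * _]scal_sum -plus_sum; apply: PartSum.sum_eq => M /leP Mm.
  have M_ge0 := pos_INR M; have := w_rec M Mm.
  move=> h; apply: (Rmult_eq_reg_r (INR M + 1)); last lra.
  transitivity (w M * (INR m - INR M) + w M * (INR M + 1)); first by field; lra.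
  by rewrite h; ring.
have := decomp_sum w (S m) (Nat.lt_0_succ m); rewrite sum_Sm /= sum_m.
by have := w_ge0 O; lra.
Qed.

(* Each term is bounded by AM-GM with [t = sqrt (3 (m + 1)) / 5], which balances the two sums. *)
Lemma sum_binomial_weighted_le (m : nat) (f a w : nat -> R) (total : R) :
  (forall M, 0 <= w M) -> (forall M, 0 <= a M) ->
  (forall M, f M <= a M * w M) -> (forall M, a M ^ 2 * (INR M + 1) <= 2) ->
  (forall M, (M <= m)%N -> w M * (INR m - INR M) = 3 * (INR M + 1) * w (S M)) ->
  sum_f_R0 w m = total -> sum_f_R0 w (S m) = total ->
  sum_f_R0 f m <= 5 * total / sqrt (3 * (INR m + 1)).
Proof.
move=> w_ge0 a_ge0 f_le a_sq w_rec sum_m sum_Sm.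
have m_ge0 := pos_INR m.
set s := sqrt _; have s_gt0 : 0 < s by apply: sqrt_lt_R0; lra.
have s_sq : s * s = 3 * (INR m + 1) by apply: sqrt_sqrt; lra.
set t := s / 5; have t_gt0 : 0 < t by rewrite /t; lra.
have total_ge0 : 0 <= total by rewrite -sum_m; apply: cond_pos_sum.
have sum_div := sum_div_succ_le w_ge0 w_rec sum_m sum_Sm.
have : sum_f_R0 f m <= t * sum_f_R0 (fun M => w M / (INR M + 1)) m + / (2 * t) * total.
  rewrite -sum_m scal_sum [/ _ * _]scal_sum -plus_sum; apply: sum_Rle => M _.
  have M_ge0 := pos_INR M.
  have := Rmult_le_compat_r _ _ _ (w_ge0 M) (amgm_le t_gt0 (a_ge0 M) M_ge0 (a_sq M)).
  move=> /(Rle_trans _ _ _ (f_le M)) /Rle_trans; apply; right; field; lra.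
have sum_div' : sum_f_R0 (fun M => w M / (INR M + 1)) m <= 12 * total / (s * s).
  rewrite s_sq; apply: (Rmult_le_reg_l (INR m + 1)); first lra.
  by apply: Rle_trans sum_div _; right; field; lra.
have : t * sum_f_R0 (fun M => w M / (INR M + 1)) m <= 12 / 5 * total / s.
  apply: Rle_trans (Rmult_le_compat_l _ _ _ (Rlt_le _ _ t_gt0) sum_div') _.
  by right; rewrite /t; field; lra.
have : / (2 * t) * total = 5 / 2 * total / s by rewrite /t; field; lra.
have : 0 <= total / s by apply: Rmult_le_pos => //; apply/Rlt_le/Rinv_0_lt_compat.
rewrite /Rdiv; lra.
Qed.

End RealBounds.

Section NatToReal.
Local Open Scope R_scope.

Lemma INR_expn a k : INR (a ^ k)%N = INR a ^ k.
Proof. by elim: k => [|k IH] //; rewrite expnS mult_INR IH. Qed.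

Lemma INR_sum_ord (g : nat -> nat) k :
  INR (\sum_(M < k.+1) g M)%N = sum_f_R0 (fun M => INR (g M)) k.
Proof. by elim: k => [|k IH]; rewrite big_ord_recr /= ?big_ord0 // plus_INR IH. Qed.

Lemma INR_leq a b : (a <= b)%N -> INR a <= INR b.
Proof. by move/leP; apply: le_INR. Qed.

End NatToReal.

Section FreeFamily.
Local Open Scope R_scope.
Variables (n : nat) (F : {set {set 'I_n}}).
Hypotheses (n_gt0 : (0 < n)%N) (F_free : free_family F).
Local Notation m := (n %/ 3).
Let f M := INR #|F :&: switch_class n M|.
Let w M := INR #|switch_class n M|.
Let a M := INR 'C(M, M./2) / 2 ^ M.

Lemma free_le_density M : f M <= a M * w M.
Proof.
have pow_gt0 : 0 < 2 ^ M by apply: pow_lt; lra.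
have := INR_leq (card_free_switch_class M F_free); rewrite !mult_INR INR_expn /=.
rewrite /f /w /a => h; apply: (Rmult_le_reg_r (2 ^ M)) => //.
apply: Rle_trans h _; right; move: pow_gt0 (INR _) (INR _); set p := 2 ^ M => p_gt0 c k.
field; lra.
Qed.

Lemma density_sq_le M : a M ^ 2 * (INR M + 1) <= 2.
Proof.
have e2 : INR 2 = 2 by rewrite /=; lra.
have e4 : INR 4 = 2 * 2 by rewrite /=; lra.
have := INR_leq (bin_half_sq M); rewrite !mult_INR !INR_expn S_INR e2 e4 Rpow_mult_distr.
have pow_gt0 : 0 < 2 ^ M by apply: pow_lt; lra.
rewrite /a; move: pow_gt0 (INR _) (INR M); set p := 2 ^ M => p_gt0 c x h.
have pp_gt0 : 0 < p * p by apply: Rmult_lt_0_compat.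
have -> : (c / p) ^ 2 * (x + 1) = c * c * (x + 1) / (p * p) by field; lra.
apply: (Rmult_le_reg_r (p * p)) => //.
rewrite /Rdiv Rmult_assoc Rinv_l ?Rmult_1_r; lra.
Qed.

Lemma card_free_family_le : INR #|F| <= 5 * (2 ^ n / sqrt (INR n)).
Proof.
have e2 : INR 2 = 2 by rewrite /=; lra.
have nR_gt0 : 0 < INR n by apply: lt_0_INR; apply/ltP.
have n_le : INR n <= 3 * (INR m + 1).
  by rewrite -S_INR (_ : 3 = INR 3) -?mult_INR; [apply: INR_leq; lia | rewrite /=; lra].
have w_ge0 M : 0 <= w M by apply: pos_INR.
have a_ge0 M : 0 <= a M.
  by apply: Rmult_le_pos; [apply: pos_INR | apply/Rlt_le/Rinv_0_lt_compat/pow_lt; lra].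
have w_rec M : (M <= m)%N -> w M * (INR m - INR M) = 3 * (INR M + 1) * w (S M).
  move=> Mm; have := congr1 INR (card_switch_class_rec n M).
  rewrite !mult_INR -minus_INR -?S_INR; last exact/leP.
  by rewrite /w (_ : INR 3 = 3) => [->|]; [ring | rewrite /=; lra].
have sum_m : sum_f_R0 w m = 2 ^ n.
  by rewrite -(INR_sum_ord (fun M => #|switch_class n M|)) sum_card_switch_class INR_expn e2.
have sum_Sm : sum_f_R0 w (S m) = 2 ^ n.
  by rewrite /= sum_m /w switch_class_overflow cards0 /=; lra.
have -> : INR #|F| = sum_f_R0 f m.
  by rewrite (card_split_switch_class F) (INR_sum_ord (fun M => #|F :&: switch_class n M|)).
have := sum_binomial_weighted_le w_ge0 a_ge0 free_le_density density_sq_le w_rec sum_m sum_Sm.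
move/Rle_trans; apply.
have sqrt_le : sqrt (INR n) <= sqrt (3 * (INR m + 1)) by apply: sqrt_le_1_alt.
have sqrt_gt0 : 0 < sqrt (INR n) by apply: sqrt_lt_R0.
have pow_gt0 : 0 < 2 ^ n by apply: pow_lt; lra.
rewrite /Rdiv Rmult_assoc; apply: Rmult_le_compat_l; first lra.
by apply: Rmult_le_compat_l; [lra | apply: Rinv_le_contravar].
Qed.
End FreeFamily.

(* Re-importing the reals restores the [%R] scope key, which the mathcomp imports rebind. *)
From Stdlib Require Import Reals.

Theorem theorem3 :
  exists C : R, (0 < C)%R /\
    forall (n : nat) (F : {set {set 'I_n}}), (0 < n)%N ->
      free_family F ->
      (INR #|F| <= C * exp (120 * sqrt (ln (INR n))) * (2 ^ n / sqrt (INR n)))%R.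
Proof.
exists 5%R; split; first lra.
move=> n F n_gt0 F_free; apply: Rle_trans (card_free_family_le n_gt0 F_free) _.
have exp_ge1 : (1 <= exp (120 * sqrt (ln (INR n))))%R.
  by have := exp_ineq1_le (120 * sqrt (ln (INR n))); have := sqrt_pos (ln (INR n)); lra.
have bound_ge0 : (0 <= 2 ^ n / sqrt (INR n))%R.
  apply: Rmult_le_pos; first by apply: pow_le; lra.
  by apply/Rlt_le/Rinv_0_lt_compat/sqrt_lt_R0/lt_0_INR/ltP.
nra.
Qed.
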